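(* Let $d\ge 2$ and let $\mathcal U,\mathcal H$ be as defined in the context. Then $\operatorname{rs}(\mathcal U,\mathcal H)\le 2^{d-1}$.
   Context: Let $d\ge 2$. Define $\mathcal U=\{(x_1,\dots,x_d): x_1,\dots,x_{d-1}\in\{-1,1\},\ x_d\in\{-(d-1),\dots,d-1\}\}$ (integers) and $\mathcal H=\{\{x\in\mathbb R^d:\sum_{i=1}^d a_ix_i=0\}: a_1,\dots,a_{d-1}\in\{0,1\},\ a_d=-1\}$. $\operatorname{rs}(\mathcal U,\mathcal H)=\max_{S}\,|\{p\in\mathcal U: p\in S\}|\cdot|\{h\in\mathcal H: S\subseteq h\}|$, the maximum over all affine subspaces $S\subseteq\mathbb R^d$. *)

From HB Require Import structures.
From mathcomp Require Import all_boot all_algebra.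
From mathcomp Require Import boolp.
Set Implicit Arguments. Unset Strict Implicit. Unset Printing Implicit Defensive.
Import GRing.Theory Num.Theory.
Local Open Scope ring_scope.

Section Defs.
Variables (R : realFieldType) (d : nat).

(* Coordinates are indexed by 'I_d; x_1,...,x_{d-1} are indices 0..d-2,
   x_d is index d-1. *)

(* Index type of U: sign vector (x_1..x_{d-1}) in {-1,1}^{d-1}
   (true = 1, false = -1) and t : 'I_(2d-1) with x_d = t - (d-1). *)
Definition Uidx := ({ffun 'I_d.-1 -> bool} * 'I_(2 * d - 1))%type.

Definition ptU (u : Uidx) : 'rV[R]_d :=
  \row_(i < d)
    match @insub nat (fun k => k < d.-1)%N _ (nat_of_ord i) with
    | Some j => if u.1 j then 1 else -1
    | None => (nat_of_ord u.2)%:R - (d.-1)%:R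
    end.

(* Index type of H: (a_1..a_{d-1}) in {0,1}^{d-1}; a_d = -1. *)
Definition Hidx := {ffun 'I_d.-1 -> bool}.

Definition coefH (a : Hidx) (i : 'I_d) : R :=
  match @insub nat (fun k => k < d.-1)%N _ (nat_of_ord i) with
  | Some j => (a j)%:R
  | None => -1
  end.

Definition inH (a : Hidx) (x : 'rV[R]_d) : bool :=
  \sum_(i < d) coefH a i * x 0 i == 0.

(* The (nonempty) affine subspace S = p + rowspace(W) of R^d. *)
Definition inS (p : 'rV[R]_d) (W : 'M[R]_d) (x : 'rV[R]_d) : bool :=
  (x - p <= W)%MS.

Definition nPts (p : 'rV[R]_d) (W : 'M[R]_d) : nat :=
  #|[set u : Uidx | inS p W (ptU u)]|.

Definition nHyps (p : 'rV[R]_d) (W : 'M[R]_d) : nat :=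
  #|[set a : Hidx | `[< forall x, inS p W x -> inH a x >] ]|.

End Defs.

From mathcomp Require Import all_boot all_algebra.
From mathcomp Require Import boolp.
Set Implicit Arguments. Unset Strict Implicit. Unset Printing Implicit Defensive.
Import GRing.Theory Num.Theory.
Local Open Scope ring_scope.

(* Write d = n + 1 and let S = p + rowspace(W).  Project R^d onto its first
   n coordinates and let V be the projection of the direction space of S,
   of rank r <= n.
   The counting rests on one fact of linear algebra (card_cube_section): a
   family of vertices of a combinatorial cube {v_j(0), v_j(1)}^n whose pairwise
   differences all lie in a subspace of rank r has at most 2^r members, since
   some r coordinates determine the vectors of that subspace.
   - Points: if some hyperplane h_a of H contains S, then on S the last
     coordinate is an affine function of the first n ones, so a point of U in S
     is determined by its sign vector; the sign vectors of U-points of S differ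
     by vectors of V, whence at most 2^r points (nPts_le).
   - Hyperplanes: h_a contains S iff a.(first n columns of W)^T equals the last
     column of W, so the 0/1 vectors a of hyperplanes containing S differ by
     vectors of the kernel of V^T, of rank n - r: at most 2^(n-r) of them
     (nHyps_le).
   Multiplying gives rs(U, H) <= 2^r * 2^(n-r) = 2^(d-1); if no hyperplane
   contains S, the product is 0. *)

Section CoordinateSubspace.
Variables (F : fieldType) (m n : nat).

Lemma rank_coordinates (V : 'M[F]_(m, n)) :
  exists f : 'I_(\rank V) -> 'I_n,
    forall z : 'rV[F]_n, (z <= V)%MS -> (forall i, z 0 (f i) = 0) -> z = 0.
Proof.
pose B := row_base V; pose g := maxrankfun B^T.
have rkB : \rank B^T = \rank V by rewrite mxrank_tr eq_row_base.
exists (g \o cast_ord (esym rkB)) => z /= zV z0.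
have /submxP[c zE] : (z <= B)%MS by rewrite eq_row_base.
have Bg_free : row_free (colsub g B).
  have /eqP rk_sub := maxrowsub_free B^T.
  by rewrite /row_free -mxrank_tr trmx_mxsub rk_sub; apply/eqP.
have : c *m colsub g B == 0.
  apply/eqP/rowP => i; rewrite mulmx_colsub -zE !mxE.
  by have := z0 (cast_ord rkB i); rewrite /= cast_ordK.
by rewrite mulmx_free_eq0 // zE => /eqP->; rewrite mul0mx.
Qed.

Definition cube_pt (v : 'I_n -> bool -> F) (b : {ffun 'I_n -> bool}) : 'rV[F]_n :=
  \row_j v j (b j).

(* A family of distinct cube vertices whose pairwise differences lie in a
   subspace V has at most 2^(rank V) members: it injects into {0,1}^(rank V)
   through the coordinates of rank_coordinates. *)
Lemma card_cube_section (T : finType) (X : {set T})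
    (g : T -> {ffun 'I_n -> bool}) (v : 'I_n -> bool -> F) (V : 'M[F]_(m, n)) :
  (forall j, v j true != v j false) -> {in X &, injective g} ->
  {in X &, forall x y, (cube_pt v (g x) - cube_pt v (g y) <= V)%MS} ->
  (#|X| <= 2 ^ \rank V)%N.
Proof.
move=> v_inj g_inj diffV; have [f f_coord] := rank_coordinates V.
pose G x : {ffun 'I_(\rank V) -> bool} := [ffun i => g x (f i)].
have -> : (2 ^ \rank V = #|{ffun 'I_(\rank V) -> bool}|)%N.
  by rewrite card_ffun card_bool card_ord.
rewrite -(@card_in_imset _ _ G X) ?max_card // => x y xX yX eqG.
apply: g_inj => //; apply/ffunP => j.
have diff0 : cube_pt v (g x) - cube_pt v (g y) = 0.
  apply: f_coord (diffV x y xX yX) _ => i.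
  have := congr1 (fun h : {ffun _ -> bool} => h i) eqG.
  by rewrite !mxE !ffunE => ->; rewrite subrr.
move/rowP/(_ j): diff0; rewrite !mxE => /eqP; rewrite subr_eq0 => /eqP.
have := v_inj j; case: (g x j); case: (g y j) => // ne eq;
  by rewrite eq eqxx in ne.
Qed.
End CoordinateSubspace.

Section PointsAndHyperplanes.
Variables (R : realFieldType) (n : nat) (p : 'rV[R]_n.+1) (W : 'M[R]_n.+1).

Local Notation wd := (widen_ord (leqnSn n)).

Definition front m (M : 'M[R]_(m, n.+1)) : 'M[R]_(m, n) := colsub wd M.

Lemma front_sub m1 m2 (A : 'M[R]_(m1, n.+1)) (B : 'M[R]_(m2, n.+1)) :
  (A <= B)%MS -> (front A <= front B)%MS.
Proof.
by move=> AB; rewrite /front -[A]mulmx1 -[B]mulmx1 -!mulmx_colsub submxMr.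
Qed.

Lemma insub_widen (j : 'I_n) : (insub (nat_of_ord (wd j)) : option 'I_n) = Some j.
Proof. exact: valK. Qed.

Lemma insub_max : (insub (nat_of_ord (@ord_max n)) : option 'I_n) = None.
Proof. by rewrite insubF //= ltnn. Qed.

Lemma inH_lastE (a : Hidx n.+1) (x : 'rV[R]_n.+1) :
  inH a x = (\sum_(j < n) (a j)%:R * x 0 (wd j) == x 0 ord_max).
Proof.
rewrite /inH big_ord_recr /= /coefH insub_max mulN1r subr_eq0.
by under eq_bigr => j _ do rewrite insub_widen.
Qed.

Lemma ptU_front (u : Uidx n.+1) j : (ptU R u) 0 (wd j) = if u.1 j then 1 else -1.
Proof. by rewrite /ptU mxE insub_widen. Qed.

Lemma ptU_last (u : Uidx n.+1) : (ptU R u) 0 ord_max = (nat_of_ord u.2)%:R - n%:R.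
Proof. by rewrite /ptU mxE insub_max. Qed.

Definition contains_S (a : Hidx n.+1) : Prop := forall x, inS p W x -> inH a x.

Lemma contains_S_dir a : contains_S a ->
  forall w : 'rV[R]_n.+1, (w <= W)%MS ->
    \sum_(j < n) (a j)%:R * w 0 (wd j) = w 0 ord_max.
Proof.
move=> Sa w wW.
have : inH a p by apply: Sa; rewrite /inS subrr sub0mx.
rewrite inH_lastE => /eqP atp.
have := Sa (p + w); rewrite inH_lastE /inS addrC addKr => /(_ wW)/eqP.
rewrite mxE -atp; under eq_bigr => j _ do rewrite mxE mulrDr.
by rewrite big_split /= => /addrI.
Qed.

Lemma contains_S_normal a : contains_S a ->
  cube_pt (fun _ b => (b : nat)%:R) a *m (front W)^T = (col ord_max W)^T.
Proof.
move=> Sa; apply/rowP => k; have := contains_S_dir Sa (row_sub k W).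
by rewrite !mxE => <-; apply: eq_bigr => j _; rewrite !mxE.
Qed.

Lemma nHyps_witness : (0 < nHyps p W)%N -> exists a, contains_S a.
Proof. by case/card_gt0P => a; rewrite inE => /asboolP; exists a. Qed.

Lemma front_ptU (u : Uidx n.+1) :
  front (ptU R u) = cube_pt (fun _ b => if b then 1 else -1) u.1.
Proof. by apply/rowP => j; rewrite !mxE insub_widen. Qed.

(* Once some h_a contains S, a point of U in S is determined by its signs:
   its last coordinate is then fixed by the equation of h_a. *)
Lemma ptU_on_S_injective a : contains_S a ->
  {in [set u | inS p W (ptU R u)] &, injective (fun u : Uidx n.+1 => u.1)}.
Proof.
move=> Sa [s t] [s' t']; rewrite !inE /= => /Sa Su /Sa Su' eq_s; subst s'.
have front_sum (u : Uidx n.+1) : \sum_(j < n) (a j)%:R * ptU R u 0 (wd j) =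
    \sum_(j < n) (a j)%:R * (if u.1 j then 1 else -1).
  by apply: eq_bigr => j _; rewrite ptU_front.
move: Su Su'; rewrite !inH_lastE !ptU_last !front_sum.
move=> /eqP -> /eqP/addIr/eqP; rewrite eqr_nat => /eqP eq_t.
by congr pair; apply: val_inj.
Qed.

Lemma nPts_le a : contains_S a -> (nPts p W <= 2 ^ \rank (front W))%N.
Proof.
move=> Sa; rewrite /nPts.
apply: (card_cube_section (v := fun _ b => if b then 1 else -1) _
          (ptU_on_S_injective Sa)).
  by move=> j; rewrite eq_sym eqNr oner_eq0.
move=> u u'; rewrite !inE -!front_ptU => Su Su'.
have -> : front (ptU R u) - front (ptU R u') = front (ptU R u - ptU R u').
  by apply/rowP => j; rewrite !mxE.
apply: front_sub.
have -> : ptU R u - ptU R u' = (ptU R u - p) - (ptU R u' - p).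
  by rewrite opprB addrA subrK.
by rewrite addmx_sub // eqmx_opp.
Qed.

(* At most 2^(n - r) hyperplanes of H contain S: their 0/1 vectors differ by
   elements of the kernel of (front W)^T. *)
Lemma nHyps_le : (nHyps p W <= 2 ^ (n - \rank (front W)))%N.
Proof.
rewrite /nHyps -[X in (n - X)%N]mxrank_tr -mxrank_ker.
apply: (@card_cube_section _ _ _ _ _ id (fun _ b => (b : nat)%:R)) => //.
  by move=> j /=; rewrite oner_eq0.
move=> a b; rewrite !inE => /asboolP Sa /asboolP Sb.
by apply/sub_kermxP; rewrite mulmxBl !contains_S_normal // subrr.
Qed.

End PointsAndHyperplanes.

Theorem mainTheorem7 (R : realFieldType) (d : nat) (hd : (2 <= d)%N)
  (p : 'rV[R]_d) (W : 'M[R]_d) :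
  (nPts p W * nHyps p W <= 2 ^ (d - 1))%N.
Proof.
case: d hd p W => [|n] // _ p W; rewrite subn1 /=.
have [->|/nHyps_witness [a Sa]] := posnP (nHyps p W); first by rewrite muln0.
apply: leq_trans (leq_mul (nPts_le Sa) (nHyps_le p W)) _.
by rewrite -expnD subnKC // rank_leq_col.
Qed.
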